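(* Let $S$ be a semigroup with finite $\mathcal{R}$-height, and let $B$ be a bi-ideal of $S$ in which every element has a local right identity in $B$ (i.e. for every $b\in B$ there is $u\in B$ with $b=bu$). Then $\mathrm{H}_{\mathcal{R}}(B)=n$, where $n$ is the maximal length of a chain of $\mathcal{R}$-classes of $S$ each of which intersects $B$.
   Context: For a semigroup $S$, $S^1$ denotes $S$ with an identity adjoined if necessary. Green's preorder: $a\leq_{\mathcal{R}} b$ iff $aS^1\subseteq bS^1$; $\mathcal{R}$ is the associated equivalence. $\mathcal{R}$-classes are ordered by $R_a\leq R_b$ iff $a\leq_{\mathcal{R}} b$, and the $\mathcal{R}$-height $\mathrm{H}_{\mathcal{R}}$ is the supremum of the cardinalities of chains of $\mathcal{R}$-classes. A bi-ideal of $S$ is a non-empty subset $B$ with $BS^1B\subseteq B$; $\mathrm{H}_{\mathcal{R}}(B)$ is computed in the semigroup $B$ itself. *)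

From Stdlib Require Import List.
Import ListNotations.

Section SemigroupDefs.
Variable T : Type.
Variable op : T -> T -> T.

Definition associative_op : Prop :=
  forall x y z, op x (op y z) = op (op x y) z.

(* Green's R-preorder computed inside the subsemigroup with carrier P
   (P = fun _ => True gives the preorder of S itself):
   a <=_R b  iff  a P^1 subset b P^1  iff  a = b or a = b x for some x in P. *)
Definition leR (P : T -> Prop) (a b : T) : Prop :=
  a = b \/ exists x, P x /\ a = op b x.

Definition ltR (P : T -> Prop) (a b : T) : Prop :=
  leR P a b /\ ~ leR P b a.

(* A list of representatives [a1; ...; ak] of a chain of R-classes
   R_{a1} > R_{a2} > ... > R_{ak} (pairwise strictly comparable, hence
   k pairwise distinct, totally ordered R-classes). *)
Fixpoint R_chain (P : T -> Prop) (l : list T) : Prop :=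
  match l with
  | [] => True
  | a :: l' => Forall (fun b => ltR P b a) l' /\ R_chain P l'
  end.

Definition finite_R_height : Prop :=
  exists N : nat, forall l, R_chain (fun _ => True) l -> length l <= N.

Definition R_height_eq (P : T -> Prop) (n : nat) : Prop :=
  (exists l, Forall P l /\ R_chain P l /\ length l = n) /\
  (forall l, Forall P l -> R_chain P l -> length l <= n).

(* bi-ideal: non-empty, B S^1 B subset B *)
Definition bi_ideal (B : T -> Prop) : Prop :=
  (exists b, B b) /\
  (forall b1 b2, B b1 -> B b2 -> B (op b1 b2)) /\
  (forall b1 s b2, B b1 -> B b2 -> B (op (op b1 s) b2)).

(* n is the maximal length of a chain of R-classes of S each of which
   intersects B (representatives chosen in B). *)
Definition max_chain_meeting (B : T -> Prop) (n : nat) : Prop :=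
  (exists l, Forall B l /\ R_chain (fun _ => True) l /\ length l = n) /\
  (forall l, Forall B l -> R_chain (fun _ => True) l -> length l <= n).

End SemigroupDefs.
Arguments associative_op {T}.
Arguments finite_R_height {T}.
Arguments bi_ideal {T}.
Arguments R_height_eq {T}.
Arguments max_chain_meeting {T}.
Arguments leR {T}.
Arguments ltR {T}.
Arguments R_chain {T}.

From Stdlib Require Import List.

(* If a = b s with a, b in B, pick local right identities a = a u and b = b v
   in B; then a = b (v s u) and v s u lies in B S^1 B, a subset of B.  So the
   R-preorder of B is the restriction of that of S, the chains of R-classes
   of B are exactly the chains of R-classes of S with representatives in B,
   and the two heights agree. *)

Section GreenRestriction.

Variable T : Type.
Variable op : T -> T -> T.

Lemma leR_full (P : T -> Prop) (a b : T) :
  leR op P a b -> leR op (fun _ => True) a b.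
Proof.
  intros [Hab | [x [_ Hx]]].
  - now left.
  - right; now exists x.
Qed.

Lemma leR_bi_ideal (B : T -> Prop) (a b : T) :
  associative_op op ->
  (forall b1 s b2, B b1 -> B b2 -> B (op (op b1 s) b2)) ->
  (forall c, B c -> exists u, B u /\ c = op c u) ->
  B a -> B b -> leR op (fun _ => True) a b -> leR op B a b.
Proof.
  intros Hassoc HBSB Hlocal Ba Bb [Hab | [s [_ Hs]]]; [now left |].
  destruct (Hlocal a Ba) as [u [Bu Hu]].
  destruct (Hlocal b Bb) as [v [Bv Hv]].
  right; exists (op (op v s) u); split.
  - now apply HBSB.
  - rewrite Hu, Hs, Hv at 1; now rewrite !Hassoc.
Qed.

Lemma R_chain_ext (P Q C : T -> Prop) (l : list T) :
  (forall a b, C a -> C b -> (leR op P a b <-> leR op Q a b)) ->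
  Forall C l -> (R_chain op P l <-> R_chain op Q l).
Proof.
  intros HPQ; induction l as [| a l IH]; intros HC; simpl; [tauto |].
  apply Forall_cons_iff in HC as [Ca Cl].
  assert (Hlt : forall b, In b l -> (ltR op P b a <-> ltR op Q b a)).
  { intros b Hb; assert (Cb : C b) by (rewrite Forall_forall in Cl; auto).
    unfold ltR; rewrite (HPQ b a Cb Ca), (HPQ a b Ca Cb); tauto. }
  rewrite (IH Cl), !Forall_forall.
  split; intros [Hhead Htail]; split; auto; intros b Hb; apply (Hlt b Hb); auto.
Qed.

Lemma R_chain_bi_ideal (B : T -> Prop) (l : list T) :
  associative_op op -> bi_ideal op B ->
  (forall c, B c -> exists u, B u /\ c = op c u) ->
  Forall B l -> (R_chain op B l <-> R_chain op (fun _ => True) l).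
Proof.
  intros Hassoc [_ [_ HBSB]] Hlocal.
  apply R_chain_ext; split.
  - apply leR_full.
  - now apply leR_bi_ideal.
Qed.

End GreenRestriction.

Theorem proposition3p5 (T : Type) (op : T -> T -> T) (B : T -> Prop) (n : nat) :
  associative_op op ->
  finite_R_height op ->
  bi_ideal op B ->
  (forall b, B b -> exists u, B u /\ b = op b u) ->
  max_chain_meeting op B n ->
  R_height_eq op B n.
Proof.
  intros Hassoc _ Hbi Hlocal [[l [Bl [Hl Hlen]]] Hmax].
  split.
  - exists l; repeat split; auto.
    now apply (R_chain_bi_ideal _ _ B l Hassoc Hbi Hlocal Bl).
  - intros l' Bl' Hl'; apply Hmax; auto.
    now apply (R_chain_bi_ideal _ _ B l' Hassoc Hbi Hlocal Bl').
Qed.
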